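(* Let $k$ be a non-archimedean local field of residue characteristic $2$, with ring of integers $\mathfrak o$ and normalized valuation $\operatorname{ord}$. Let $B(x)=\sum_{i=1}^n a_i x_i^2$ be a diagonal quadratic form on $k^n$ with coefficients $a_i\in k$ satisfying $0\le \operatorname{ord} a_i\le 1$ for all $i$, and suppose $B$ is anisotropic over $k$. Then for every nonzero $x\in k^n$, \[ \max_i |a_i x_i^2| \;\ge\; |B(x)| \;\ge\; \max_i |4 a_i x_i^2| . \]
   Context: $|\cdot|$ is the normalized absolute value on $k$ ($|\varpi|=q^{-1}$ for a uniformizer $\varpi$, where $q$ is the cardinality of the residue field). A quadratic form is anisotropic if $B(x)=0$ only for $x=0$. *)

From HB Require Import structures.
From mathcomp Require Import all_boot all_order all_algebra.
Set Implicit Arguments. Unset Strict Implicit. Unset Printing Implicit Defensive.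
Import Order.TTheory GRing.Theory Num.Theory.
Local Open Scope ring_scope.

(* A non-archimedean local field with residue characteristic 2, presented
   through its normalized discrete valuation [ord] (defined on nonzero
   elements; the value at 0 is irrelevant and never used, 0 having
   valuation +oo by convention). *)

Section LocalField.
Variable k : fieldType.

Definition ord_ge (ord : k -> int) (N : int) (z : k) : Prop :=
  z = 0 \/ N <= ord z.

Definition in_o (ord : k -> int) (z : k) : Prop := ord_ge ord 0 z.
Definition in_m (ord : k -> int) (z : k) : Prop := ord_ge ord 1 z.

Record local_field_res2 := LocalFieldRes2 {
  ord : k -> int;
  (* cardinality of the residue field o/m *)
  resq : nat;
  ordM : forall x y, x != 0 -> y != 0 -> ord (x * y) = ord x + ord y;
  ordD : forall x y, x != 0 -> y != 0 -> x + y != 0 ->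
           Num.min (ord x) (ord y) <= ord (x + y);
  (* normalized: a uniformizer exists *)
  ord_unif : exists pi : k, pi != 0 /\ ord pi = 1;
  res_finite : exists s : seq k,
      [/\ size s = resq,
          forall i, (i < size s)%N -> in_o ord (nth 0 s i),
          forall i j, (i < j < size s)%N -> ~ in_m ord (nth 0 s i - nth 0 s j)
        & forall z, in_o ord z -> exists2 r, r \in s & in_m ord (z - r)];
  res_char2 : in_m ord 2%:R;
  complete : forall u : nat -> k,
      (forall N : int, exists M : nat, forall m n : nat, (M <= m)%N -> (M <= n)%N ->
          ord_ge ord N (u m - u n)) ->
      exists l : k, forall N : int, exists M : nat, forall n : nat, (M <= n)%N ->
          ord_ge ord N (u n - l)
}.

Definition absv (K : local_field_res2) (x : k) : rat :=
  if x == 0 then 0 else ((resq K)%:R : rat) ^ (- ord K x).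

End LocalField.

Definition diagB (k : fieldType) (n : nat) (a x : 'I_n -> k) : k :=
  \sum_(i < n) a i * x i ^+ 2.

Definition anisotropic (k : fieldType) (n : nat) (a : 'I_n -> k) : Prop :=
  forall x : 'I_n -> k, diagB a x = 0 -> forall i, x i = 0.

From mathcomp Require Import all_boot all_order all_algebra.
From mathcomp Require Import zify ring.
Set Implicit Arguments. Unset Strict Implicit. Unset Printing Implicit Defensive.
Import Order.TTheory GRing.Theory Num.Theory.
Local Open Scope ring_scope.

(* The upper bound is the ultrametric inequality.  For the lower bound,
   suppose |B(x)| < |4 a_i x_i^2| for some i, so that
   w := -B(x) / (4 a_i x_i^2) lies in the maximal ideal.  By completeness
   (Hensel's lemma) z + z^2 = w has a root z in the maximal ideal, and
   replacing x_i by (1 + 2z) x_i adds 4 a_i x_i^2 (z + z^2) = -B(x) to the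
   form.  Since 2 lies in the maximal ideal, 1 + 2z <> 0, so this is a
   nonzero isotropic vector. *)

Section Valuation.
Variables (k : fieldType) (K : local_field_res2 k).
Local Notation o := (ord K).

Lemma ord1 : o 1 = 0.
Proof.
have := ordM K (oner_neq0 k) (oner_neq0 k); rewrite mulr1.
by move: (o 1) => t; lia.
Qed.

Lemma ordN z : z != 0 -> o (- z) = o z.
Proof.
move=> z0; have N1_neq0 : (-1 : k) != 0 by rewrite oppr_eq0 oner_neq0.
have ordN1 : o (-1) = 0.
  have := ordM K N1_neq0 N1_neq0; rewrite mulrNN mulr1 ord1.
  by move: (o (-1)) => t; lia.
by rewrite -mulN1r (ordM K N1_neq0 z0) ordN1 add0r.
Qed.

Lemma ord_geW N1 N2 x : N1 <= N2 -> ord_ge o N2 x -> ord_ge o N1 x.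
Proof. by move=> h [->|hx]; [left|right; apply: le_trans hx]. Qed.

Lemma ord_geD N x y : ord_ge o N x -> ord_ge o N y -> ord_ge o N (x + y).
Proof.
case=> [->|hx]; first by rewrite add0r.
case=> [->|hy]; first by rewrite addr0; right.
have [->|s0] := eqVneq (x + y) 0; first by left.
have [->|x0] := eqVneq x 0; first by rewrite add0r; right.
have [->|y0] := eqVneq y 0; first by rewrite addr0; right.
by right; apply: le_trans (ordD K x0 y0 s0); rewrite le_min hx hy.
Qed.

Lemma ord_geN N x : ord_ge o N x -> ord_ge o N (- x).
Proof.
have [->|x0] := eqVneq x 0; first by rewrite oppr0.
by case=> [x_eq0|hx]; [rewrite x_eq0 eqxx in x0|right; rewrite ordN].
Qed.

Lemma ord_geB N x y : ord_ge o N x -> ord_ge o N y -> ord_ge o N (x - y).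
Proof. by move=> hx hy; apply: ord_geD => //; apply: ord_geN. Qed.

Lemma ord_geM N1 N2 x y :
  ord_ge o N1 x -> ord_ge o N2 y -> ord_ge o (N1 + N2) (x * y).
Proof.
case=> [->|hx]; first by rewrite mul0r; left.
case=> [->|hy]; first by rewrite mulr0; left.
have [->|x0] := eqVneq x 0; first by rewrite mul0r; left.
have [->|y0] := eqVneq y 0; first by rewrite mulr0; left.
by right; rewrite ordM // lerD.
Qed.

Lemma ord_ge_all_eq0 z : (forall N, ord_ge o N z) -> z = 0.
Proof.
move=> h; have [//|z0] := eqVneq z 0.
by case: (h (o z + 1)) => [//|]; lia.
Qed.

Lemma one_add_two_mul_neq0 z : in_m o z -> 1 + 2%:R * z != 0.
Proof.
move=> zm; apply/negP; rewrite addrC addr_eq0 => /eqP two_z.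
have N1_neq0 : (-1 : k) != 0 by rewrite oppr_eq0 oner_eq0.
have [z0|z0] := eqVneq z 0; first by move: N1_neq0; rewrite -two_z z0 mulr0 eqxx.
have two0 : (2%:R : k) != 0.
  by apply: contraNneq N1_neq0 => h; rewrite -two_z h mul0r.
have o2 : 1 <= o 2%:R by case: (res_char2 K) => // h; rewrite h eqxx in two0.
case: zm => [z_eq0|oz]; first by rewrite z_eq0 eqxx in z0.
have := ordM K two0 z0; rewrite two_z ordN ?oner_eq0 // ord1; lia.
Qed.

Section Hensel.
Variable w : k.
Hypothesis w_in_m : in_m o w.

(* Fixed-point iteration of z |-> w - z^2, which contracts the maximal
   ideal because z1^2 - z2^2 = (z1 - z2)(z1 + z2). *)
Fixpoint hensel_seq (m : nat) : k :=
  if m is m'.+1 then w - hensel_seq m' ^+ 2 else 0.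

Lemma hensel_seq_in_m m : in_m o (hensel_seq m).
Proof.
elim: m => [|m IH] /=; first by left.
apply: ord_geB => //; rewrite expr2.
by apply: (@ord_geW _ (1 + 1)) => //; apply: ord_geM.
Qed.

Lemma hensel_seq_step m :
  ord_ge o m.+1%:Z (hensel_seq m.+1 - hensel_seq m).
Proof.
elim: m => [|m IH]; first by rewrite /= subr0 expr2 mulr0 subr0.
have -> : hensel_seq m.+2 - hensel_seq m.+1 =
    - ((hensel_seq m.+1 - hensel_seq m) * (hensel_seq m.+1 + hensel_seq m)).
  by rewrite /=; ring.
apply: ord_geN; rewrite -[m.+2]addn1 PoszD.
by apply: ord_geM => //; apply: ord_geD; apply: hensel_seq_in_m.
Qed.

Lemma hensel_seq_cauchy (N : int) m p :
  (`|N| <= m)%N -> ord_ge o N (hensel_seq (m + p) - hensel_seq m).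
Proof.
move=> hm; elim: p => [|p IH]; first by rewrite addn0 subrr; left.
have -> : hensel_seq (m + p.+1) - hensel_seq m =
    (hensel_seq (m + p).+1 - hensel_seq (m + p)) +
    (hensel_seq (m + p) - hensel_seq m) by rewrite addnS; ring.
by apply: ord_geD => //; apply: ord_geW (hensel_seq_step _); lia.
Qed.

Lemma hensel_seq_cvg : exists l : k, forall N : int, exists M : nat,
  forall p, (M <= p)%N -> ord_ge o N (hensel_seq p - l).
Proof.
apply: complete => N; exists `|N|%N => m p hm hp.
have [hmp|/ltnW hpm] := leqP m p.
  by rewrite -(subnKC hmp) -opprB; apply/ord_geN/hensel_seq_cauchy.
by rewrite -(subnKC hpm); apply: hensel_seq_cauchy.
Qed.

Lemma exists_root_add_sqr : exists2 z, z + z ^+ 2 = w & in_m o z.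
Proof.
have [l hl] := hensel_seq_cvg.
have l_in_m : in_m o l.
  have [M hM] := hl 1; rewrite -[l](subKr (hensel_seq M)).
  by apply: ord_geB; [apply: hensel_seq_in_m|apply: hM].
exists l => //.
apply/eqP; rewrite -subr_eq0; apply/eqP/ord_ge_all_eq0 => N.
have [M hM] := hl N.
have -> : l + l ^+ 2 - w = - (hensel_seq M.+1 - l)
    - (hensel_seq M - l) * (hensel_seq M + l) by rewrite /=; ring.
apply: ord_geB; first exact/ord_geN/hM.
rewrite -(addr0 N); apply: ord_geM; first exact: hM.
by apply: ord_geD; apply: (@ord_geW _ 1) => //; apply: hensel_seq_in_m.
Qed.

End Hensel.
End Valuation.

Section AbsoluteValue.
Variables (k : fieldType) (K : local_field_res2 k).
Local Notation o := (ord K).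
Local Notation q := ((resq K)%:R : rat).

Lemma resq_ge1 : 1 <= q.
Proof.
case: (res_finite K) => s [s_size _ _ s_repr].
have [r r_in_s _] := s_repr 0 (or_introl erefl).
by rewrite ler1n -s_size; case: s r_in_s {s_size s_repr}.
Qed.

Lemma absv_ge0 z : 0 <= absv K z.
Proof.
rewrite /absv; case: ifP => // _.
by apply: exprz_ge0; apply: le_trans ler01 resq_ge1.
Qed.

Lemma absvE z : z != 0 -> absv K z = q ^ (- o z).
Proof. by rewrite /absv => /negbTE ->. Qed.

Lemma absv_le_ord z1 z2 :
  z1 != 0 -> z2 != 0 -> o z2 <= o z1 -> absv K z1 <= absv K z2.
Proof.
move=> z1_neq0 z2_neq0 h; rewrite !absvE //.
by apply: ler_weXz2l resq_ge1 _ _ _; rewrite lerN2.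
Qed.

Lemma absvD_le_max x y : absv K (x + y) <= Num.max (absv K x) (absv K y).
Proof.
have [->|x0] := eqVneq x 0; first by rewrite add0r le_max lexx orbT.
have [->|y0] := eqVneq y 0; first by rewrite addr0 le_max lexx.
have [->|s0] := eqVneq (x + y) 0; first by rewrite /absv eqxx le_max absv_ge0.
have := ordD K x0 y0 s0; rewrite le_max.
have [_ h|_ h] := leP (o x) (o y); first by rewrite (absv_le_ord s0 x0 h).
by rewrite (absv_le_ord s0 y0 h) orbT.
Qed.

Lemma absv_sum_le_bigmax (I : Type) (r : seq I) (P : pred I) (F : I -> k) :
  absv K (\sum_(i <- r | P i) F i) <= \big[Num.max/0]_(i <- r | P i) absv K (F i).
Proof.
apply: (big_ind2 (fun s m => absv K s <= m)) => //; first by rewrite /absv eqxx.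
move=> s1 m1 s2 m2 h1 h2; apply: le_trans (absvD_le_max s1 s2) _.
by rewrite ge_max !le_max h1 h2 orbT.
Qed.

End AbsoluteValue.

Section DiagonalForm.
Variables (k : fieldType) (n : nat) (a x : 'I_n -> k).

Lemma diagB_scale_at i y :
  diagB a (fun j => if j == i then x i * y else x j) =
  diagB a x + a i * x i ^+ 2 * (y ^+ 2 - 1).
Proof.
rewrite /diagB (bigD1 i) //= [in RHS](bigD1 i) //= eqxx.
under eq_bigr => j /negbTE -> do [].
ring.
Qed.

Lemma diagB_scale_at_eq0 i z :
  4%:R * (a i * x i ^+ 2) != 0 ->
  z + z ^+ 2 = - diagB a x / (4%:R * (a i * x i ^+ 2)) ->
  diagB a (fun j => if j == i then x i * (1 + 2%:R * z) else x j) = 0.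
Proof.
move=> c4_neq0 hz; rewrite diagB_scale_at.
have -> : (1 + 2%:R * z) ^+ 2 - 1 = 4%:R * (z + z ^+ 2) by ring.
by rewrite hz mulrCA mulrA mulrC divfK // addrN.
Qed.

Variable K : local_field_res2 k.
Local Notation o := (ord K).

Lemma ord_diagB_le_ord4 i : anisotropic a ->
  4%:R * (a i * x i ^+ 2) != 0 -> diagB a x != 0 ->
  o (diagB a x) <= o (4%:R * (a i * x i ^+ 2)).
Proof.
set c4 := 4%:R * _; set B := diagB a x => aniso c4_neq0 B_neq0.
rewrite leNgt; apply/negP => hlt.
set w := - B / c4.
have w_neq0 : w != 0 by rewrite mulf_neq0 ?invr_eq0 ?oppr_eq0.
have w_in_m : in_m o w.
  right; have := ordM K w_neq0 c4_neq0.
  rewrite divfK // ordN // => ordB; move: hlt; rewrite ordB; lia.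
have [z hz z_in_m] := exists_root_add_sqr w_in_m.
have := aniso _ (diagB_scale_at_eq0 c4_neq0 hz) i; rewrite eqxx.
move/eqP; rewrite mulf_eq0 (negbTE (one_add_two_mul_neq0 z_in_m)) orbF => /eqP xi0.
by move: c4_neq0; rewrite /c4 xi0 expr0n !mulr0 eqxx.
Qed.

End DiagonalForm.

Theorem lemma2p1 (k : fieldType) (K : local_field_res2 k) (n : nat)
  (a : 'I_n -> k)
  (ha : forall i, a i != 0 /\ (0 <= ord K (a i) <= 1))
  (hB : anisotropic a)
  (x : 'I_n -> k) (hx : exists i, x i != 0) :
  \big[Num.max/0]_(i < n) absv K (a i * x i ^+ 2) >= absv K (diagB a x) /\
  absv K (diagB a x) >= \big[Num.max/0]_(i < n) absv K (4%:R * a i * x i ^+ 2).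
Proof.
split; first exact: absv_sum_le_bigmax.
apply: bigmax_le; first exact: absv_ge0.
move=> i _; rewrite -mulrA.
have [->|c4_neq0] := eqVneq (4%:R * (a i * x i ^+ 2)) 0.
  by rewrite /absv eqxx absv_ge0.
have B_neq0 : diagB a x != 0.
  apply: contraNneq c4_neq0 => /hB /(_ i) ->.
  by rewrite expr0n !mulr0.
by apply: absv_le_ord => //; apply: ord_diagB_le_ord4.
Qed.
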